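(* Assume $\mathcal{Z}$ is norm-Euclidean. Then there is a constant $R_2>0$ such that for every digit string $s$ with $n=|s|$ and all $x,y\in C_s$, $d(x,y)\le R_2\,d(T^nx,T^ny)$.
   Context: $X=\mathbb{R}^d$ (including $\mathbb{C},\mathbb{H},\mathbb{O}$ as $\mathbb{R}^2,\mathbb{R}^4,\mathbb{R}^8$) with Euclidean norm and distance $d$. $\iota:X\setminus\{0\}\to X\setminus\{0\}$ satisfies $|\iota x|=1/|x|$, $d(\iota x,\iota y)=d(x,y)/(|x||y|)$ and $\iota\circ\iota=\mathrm{id}$; $\iota(0)=0$. $\mathcal{Z}$ is a discrete additive subgroup with compact quotient, $K=\{x:d(x,0)\le d(x,z)\ \forall z\in\mathcal{Z}\}$ its Dirichlet region with a boundary choice so each $x$ has a unique $[x]\in\mathcal{Z}$ with $x-[x]\in K$; norm-Euclidean means $\sup_{x\in K}|x|<1$. $Tx=\iota x-[\iota x]$ ($x\ne0$), $T0=0$. Cylinders: $C_\emptyset=K$, $C_{as}=K\cap\iota(C_s+a)$ for $a\in\mathcal{Z}$. *)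

From HB Require Import structures.
From mathcomp Require Import all_boot all_order all_algebra.
From mathcomp Require Import classical_sets reals.
Set Implicit Arguments. Unset Strict Implicit. Unset Printing Implicit Defensive.
Import Order.TTheory GRing.Theory Num.Theory.
Local Open Scope ring_scope.
Local Open Scope classical_set_scope.

Definition enorm (R : realType) (d : nat) (x : 'rV[R]_d) : R :=
  Num.sqrt (\sum_(i < d) x ord0 i ^+ 2).

Definition edist (R : realType) (d : nat) (x y : 'rV[R]_d) : R := enorm (x - y).

Definition Tmap (R : realType) (d : nat) (iota brk : 'rV[R]_d -> 'rV[R]_d)
  (x : 'rV[R]_d) : 'rV[R]_d :=
  if x == 0 then 0 else iota x - brk (iota x).

Fixpoint cyl (R : realType) (d : nat) (iota : 'rV[R]_d -> 'rV[R]_d)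
  (K : set 'rV[R]_d) (s : seq 'rV[R]_d) : set 'rV[R]_d :=
  match s with
  | [::] => K
  | a :: s' => K `&` (iota @` [set y + a | y in cyl iota K s'])
  end.

(** On a cylinder [C_(a :: s)] every point is [iota (y + a)] with [y] in
    [C_s], and [T] maps it back to [y]: since [y] lies in [K], [[y + a] = a].
    Since [Z] is norm-Euclidean, points of [K] have norm [< 1], so [iota] is
    only ever applied to [0] or to points of norm [> 1], where
    [d (iota u) (iota v) = d u v / (|u| |v|) <= d u v].  Thus every step of
    [T] along a cylinder is expanding, and [R2 = 1] works. *)
From HB Require Import structures.
From mathcomp Require Import all_boot all_order all_algebra.
From mathcomp Require Import classical_sets reals.
Import Order.TTheory GRing.Theory Num.Theory.
Local Open Scope ring_scope.
Local Open Scope classical_set_scope.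

Section EuclideanNorm.
Variables (R : realType) (d : nat).
Implicit Types x y z : 'rV[R]_d.

Lemma enorm_ge0 x : 0 <= enorm x.
Proof. exact: sqrtr_ge0. Qed.

Lemma enorm0 : enorm (0 : 'rV[R]_d) = 0.
Proof. by rewrite /enorm big1 ?sqrtr0 // => i _; rewrite mxE expr0n. Qed.

Lemma enormN x : enorm (- x) = enorm x.
Proof. by rewrite /enorm; congr Num.sqrt; apply: eq_bigr => i _; rewrite mxE sqrrN. Qed.

Lemma enorm_eq0 x : (enorm x == 0) = (x == 0).
Proof.
apply/idP/eqP => [|->]; last by rewrite enorm0.
rewrite sqrtr_eq0 => sum_le0.
have : \sum_(i < d) x ord0 i ^+ 2 == 0.
  by rewrite eq_le sum_le0 sumr_ge0 // => i _; rewrite sqr_ge0.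
rewrite psumr_eq0 => [/allP x0|i _]; last exact: sqr_ge0.
apply/rowP => i; rewrite mxE.
by apply/eqP; rewrite -sqrf_eq0; apply: x0; rewrite mem_index_enum.
Qed.

Lemma enorm_gt0 x : x != 0 -> 0 < enorm x.
Proof. by rewrite lt_def enorm_eq0 enorm_ge0 andbT. Qed.

Lemma edist0r x : edist 0 x = enorm x.
Proof. by rewrite /edist sub0r enormN. Qed.

Lemma edistr0 x : edist x 0 = enorm x.
Proof. by rewrite /edist subr0. Qed.

Lemma edistDr x y z : edist (x + z) (y + z) = edist x y.
Proof. by rewrite /edist opprD addrACA subrr addr0. Qed.

End EuclideanNorm.

Section Inversion.
Context {R : realType} {d : nat} {iota : 'rV[R]_d -> 'rV[R]_d}.
Implicit Types u v : 'rV[R]_d.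

Hypothesis enorm_iota : forall u, u != 0 -> enorm (iota u) = (enorm u)^-1.
Hypothesis edist_iota : forall u v, u != 0 -> v != 0 ->
  edist (iota u) (iota v) = edist u v / (enorm u * enorm v).
Hypothesis iota0 : iota 0 = 0.

Lemma iota_eq0 u : (iota u == 0) = (u == 0).
Proof.
apply/idP/eqP => [|->]; last by rewrite iota0.
apply: contraTeq => u0; rewrite -enorm_eq0 enorm_iota //.
by rewrite invr_eq0 enorm_eq0.
Qed.

Lemma enorm_gt1_iota u : u != 0 -> enorm (iota u) < 1 -> 1 < enorm u.
Proof. by move=> u0; rewrite enorm_iota // invf_lt1 // enorm_gt0. Qed.

Lemma enorm_iota_le u : enorm (iota u) < 1 -> enorm (iota u) <= enorm u.
Proof.
have [-> _|u0 iu_lt1] := eqVneq u 0; first by rewrite iota0.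
have u_gt1 : 1 < enorm u by exact: enorm_gt1_iota.
rewrite enorm_iota // (@le_trans _ _ 1) ?invf_le1 ?ltW //.
exact: lt_trans ltr01 u_gt1.
Qed.

Lemma edist_iota_le u v : enorm (iota u) < 1 -> enorm (iota v) < 1 ->
  edist (iota u) (iota v) <= edist u v.
Proof.
have [-> _ iv_lt1|u0 iu_lt1] := eqVneq u 0.
  by rewrite iota0 !edist0r enorm_iota_le.
have [-> _|v0 iv_lt1] := eqVneq v 0.
  by rewrite iota0 !edistr0 enorm_iota_le.
have uv_ge1 : 1 <= enorm u * enorm v.
  by rewrite mulr_ege1 // ltW // enorm_gt1_iota.
rewrite edist_iota // ler_pdivrMr ?(lt_le_trans ltr01) //.
by rewrite ler_peMr // enorm_ge0.
Qed.

End Inversion.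

Section Cylinders.
Context {R : realType} {d : nat} {iota : 'rV[R]_d -> 'rV[R]_d}.
Context {Z K : set 'rV[R]_d} {brk : 'rV[R]_d -> 'rV[R]_d}.
Implicit Types x y a : 'rV[R]_d.

Hypothesis enorm_iota : forall x, x != 0 -> enorm (iota x) = (enorm x)^-1.
Hypothesis edist_iota : forall x y, x != 0 -> y != 0 ->
  edist (iota x) (iota y) = edist x y / (enorm x * enorm y).
Hypothesis iotaK : forall x, x != 0 -> iota (iota x) = x.
Hypothesis iota0 : iota 0 = 0.
Hypothesis Z0 : Z 0.
Hypothesis ZB : forall a b, Z a -> Z b -> Z (a - b).
Hypothesis K_dirichlet : forall x, K x -> forall z, Z z -> edist x 0 <= edist x z.
Hypothesis brk_uniq : forall x z, Z z -> K (x - z) -> z = brk x.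
Hypothesis enormK_lt1 : forall x, K x -> enorm x < 1.

Lemma K_Z_eq0 y : K y -> Z y -> y = 0.
Proof.
move=> Ky Zy; apply/eqP; rewrite -enorm_eq0 eq_le enorm_ge0 andbT.
by rewrite -edistr0 (le_trans (@K_dirichlet y Ky y Zy)) // /edist subrr enorm0.
Qed.

Lemma Tmap_iotaD y a : K y -> Z a -> Tmap iota brk (iota (y + a)) = y.
Proof.
move=> Ky Za; rewrite /Tmap iota_eq0 //.
have [ya0|ya0] := eqVneq (y + a) 0.
  apply/esym/K_Z_eq0 => //.
  have -> : y = - a by apply/eqP; rewrite -addr_eq0 ya0.
  by rewrite -sub0r; apply: ZB.
by rewrite iotaK // -(@brk_uniq (y + a) a) ?addrK.
Qed.

Lemma cyl_subK {s x} : cyl iota K s x -> K x.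
Proof. by case: s => [|a s] //= []. Qed.

Lemma edist_cyl_le_iter s : (forall a, a \in s -> Z a) ->
  forall x y, cyl iota K s x -> cyl iota K s y ->
  edist x y <= edist (iter (size s) (Tmap iota brk) x)
                     (iter (size s) (Tmap iota brk) y).
Proof.
elim: s => [|a s IHs] sZ x y //=.
move=> [Kx [_ [x' cx' <-] ex]] [Ky [_ [y' cy' <-] ey]]; subst x y.
have Za : Z a by apply: sZ; rewrite mem_head.
have sZ' b : b \in s -> Z b by move=> sb; apply: sZ; rewrite inE sb orbT.
have Kx' := cyl_subK cx'; have Ky' := cyl_subK cy'.
rewrite -!iterS !iterSr !Tmap_iotaD //.
apply: le_trans (IHs sZ' _ _ cx' cy').
have -> : edist x' y' = edist (x' + a) (y' + a) by rewrite edistDr.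
by apply: edist_iota_le => //; apply: enormK_lt1.
Qed.

End Cylinders.

Theorem lemma4p4 (R : realType) (d : nat)
  (iota : 'rV[R]_d -> 'rV[R]_d) (Z K : set 'rV[R]_d) (brk : 'rV[R]_d -> 'rV[R]_d)
  (* properties of the inversion iota *)
  (hi_norm : forall x, x != 0 -> enorm (iota x) = (enorm x)^-1)
  (hi_dist : forall x y, x != 0 -> y != 0 ->
      edist (iota x) (iota y) = edist x y / (enorm x * enorm y))
  (hi_inv : forall x, x != 0 -> iota (iota x) = x)
  (hi_0 : iota 0 = 0)
  (* Z is an additive subgroup *)
  (hZ0 : Z 0) (hZsub : forall a b, Z a -> Z b -> Z (a - b))
  (* Z is discrete *)
  (hZdisc : forall z, Z z -> exists2 r : R, 0 < r &
      forall w, Z w -> edist w z < r -> w = z)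
  (* compact quotient X/Z: a bounded set of representatives *)
  (hZcocpt : exists M : R, forall x, exists2 z, Z z & edist x z <= M)
  (* K is the Dirichlet region with a boundary choice *)
  (hK_dir : forall x, K x -> forall z, Z z -> edist x 0 <= edist x z)
  (hbrkZ : forall x, Z (brk x))
  (hbrkK : forall x, K (x - brk x))
  (hbrk_uniq : forall x z, Z z -> K (x - z) -> z = brk x)
  (* norm-Euclidean: sup_{x in K} |x| < 1 *)
  (hNE : exists2 c : R, c < 1 & forall x, K x -> enorm x <= c) :
  exists2 R2 : R, 0 < R2 &
    forall s : seq 'rV[R]_d, (forall a, a \in s -> Z a) ->
    forall x y, cyl iota K s x -> cyl iota K s y ->
      edist x y <= R2 * edist (iter (size s) (Tmap iota brk) x)
                               (iter (size s) (Tmap iota brk) y).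
Proof.
have [c c_lt1 enormK_le] := hNE.
have enormK_lt1 x : K x -> enorm x < 1.
  by move=> Kx; apply: le_lt_trans (enormK_le x Kx) c_lt1.
exists 1 => // s sZ x y cx cy; rewrite mul1r.
exact: (edist_cyl_le_iter hi_norm hi_dist hi_inv hi_0 hZ0 hZsub hK_dir
  hbrk_uniq enormK_lt1).
Qed.
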